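(* Let $T$ be a commutative monad on a cartesian monoidal category $\mathbb{C}$ such that for every object $X$ the pair $\eta_{TX},T\eta_X$ has an equalizer $\theta_X:DX\to TX$, and let $R$ be an object of $\mathbb{C}$. Suppose that $T$ is $R$-observational and that $TR$ is injective with respect to the class of regular monomorphisms. Then the monad $D$ is idempotent.
   Context: $T=(T,\eta,\mu)$ with monoidal structure $\nabla$. $\mathsf{Kl}(T)$: morphisms $f:A\rightsquigarrow B$ correspond to $f^\sharp:A\to TB$, composition $(g\circledcirc f)^\sharp=\mu\circ T(g^\sharp)\circ f^\sharp$, tensor $\otimes$ is $\times$ on objects with $(f\otimes g)^\sharp=\nabla\circ(f^\sharp\times g^\sharp)$; for $h:X\to TR$, $h^\flat:X\rightsquigarrow R$ is the corresponding Kleisli morphism. $\mathsf{force}_A^\sharp=1_{TA}$; $\mathsf{copy}_n:TX\rightsquigarrow(TX)^{\otimes n}$ has $\mathsf{copy}_n^\sharp=\eta\circ\Delta_n$ ($\Delta_n$ the $n$-fold diagonal); $\mathsf{samp}_n=\mathsf{force}^{\otimes n}\circledcirc\mathsf{copy}_n:TX\rightsquigarrow X^{\otimes n}$. $T$ is $R$-observational if for each object $X$ the family of Kleisli morphisms $(h_1^\flat\otimes\cdots\otimes h_n^\flat)\circledcirc\mathsf{samp}_n:TX\rightsquigarrow R^{\otimes n}$, over all $n\in\mathbb{N}$ and all $h_1,\dots,h_n:X\to TR$, is jointly monic in $\mathsf{Kl}(T)$. An object $P$ is injective with respect to a class $\mathcal{M}$ of morphisms if for every $i:A\to B$ in $\mathcal{M}$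 and $h:A\to P$ there is $k:B\to P$ with $k\circ i=h$; regular monomorphisms are equalizers of pairs of morphisms. The monad $D$: $Dg$ is the unique map with $\theta_Z\circ Dg=Tg\circ\theta_Y$, unit $e_X$ the unique map with $\theta_X\circ e_X=\eta_X$, multiplication $m_X$ the unique map with $\theta_X\circ m_X=\mu_X\circ T\theta_X\circ\theta_{DX}$; it is idempotent if its multiplication is an isomorphism. *)

Set Implicit Arguments.
Unset Strict Implicit.

(* Cartesian monoidal categories: a category with a terminal object and
   chosen binary products (the monoidal structure is the product).      *)
Record CartCat := {
  ob : Type;
  hom : ob -> ob -> Type;
  cid : forall A, hom A A;
  ccomp : forall A B C, hom B C -> hom A B -> hom A C;
  comp_id_l : forall A B (f : hom A B), ccomp (cid B) f = f;
  comp_id_r : forall A B (f : hom A B), ccomp f (cid A) = f;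
  comp_assoc : forall A B C D (h : hom C D) (g : hom B C) (f : hom A B),
      ccomp h (ccomp g f) = ccomp (ccomp h g) f;
  one : ob;
  bang : forall A, hom A one;
  bang_uniq : forall A (f : hom A one), f = bang A;
  prod : ob -> ob -> ob;
  pr1 : forall A B, hom (prod A B) A;
  pr2 : forall A B, hom (prod A B) B;
  pair : forall Z A B, hom Z A -> hom Z B -> hom Z (prod A B);
  pr1_pair : forall Z A B (f : hom Z A) (g : hom Z B), ccomp (pr1 A B) (pair f g) = f;
  pr2_pair : forall Z A B (f : hom Z A) (g : hom Z B), ccomp (pr2 A B) (pair f g) = g;
  pair_uniq : forall Z A B (h : hom Z (prod A B)),
      pair (ccomp (pr1 A B) h) (ccomp (pr2 A B) h) = h
}.

Arguments cid {_} A.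
Arguments ccomp {_ A B C} _ _.
Arguments one {_}.
Arguments bang {_} A.
Arguments prod {_} _ _.
Arguments pr1 {_} A B.
Arguments pr2 {_} A B.
Arguments pair {_ Z A B} _ _.

Notation "g \o f" := (ccomp g f) (at level 40, left associativity).

Section CartOps.
Variable C : CartCat.

Definition pmap (A A' B B' : ob C) (f : hom A A') (g : hom B B')
  : hom (prod A B) (prod A' B') :=
  pair (f \o pr1 A B) (g \o pr2 A B).

Definition assoc (A B D : ob C) : hom (prod (prod A B) D) (prod A (prod B D)) :=
  pair (pr1 A B \o pr1 (prod A B) D)
       (pair (pr2 A B \o pr1 (prod A B) D) (pr2 (prod A B) D)).

Definition swap (A B : ob C) : hom (prod A B) (prod B A) :=
  pair (pr2 A B) (pr1 A B).

Fixpoint tpow (X : ob C) (n : nat) : ob C :=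
  match n with
  | O => one
  | S n => prod X (tpow X n)
  end.

Fixpoint diag (X : ob C) (n : nat) : hom X (tpow X n) :=
  match n with
  | O => bang X
  | S n => pair (cid X) (diag X n)
  end.

Definition is_equalizer (E A B : ob C) (f g : hom A B) (e : hom E A) : Prop :=
  f \o e = g \o e /\
  forall Z (z : hom Z A), f \o z = g \o z ->
    exists u : hom Z E, e \o u = z /\ forall u' : hom Z E, e \o u' = z -> u' = u.

Definition regular_mono (A B : ob C) (i : hom A B) : Prop :=
  exists (Q : ob C) (f g : hom B Q), is_equalizer f g i.

Definition injective_wrt_regular_monos (P : ob C) : Prop :=
  forall (A B : ob C) (i : hom A B), regular_mono i ->
    forall h : hom A P, exists k : hom B P, k \o i = h.

Definition is_iso (A B : ob C) (f : hom A B) : Prop :=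
  exists g : hom B A, g \o f = cid A /\ f \o g = cid B.

End CartOps.

Arguments pmap {C A A' B B'} _ _.
Arguments assoc {C} A B D.
Arguments swap {C} A B.
Arguments tpow {C} X n.
Arguments diag {C} X n.
Arguments is_equalizer {C E A B} f g e.
Arguments regular_mono {C A B} i.
Arguments injective_wrt_regular_monos {C} P.
Arguments is_iso {C A B} f.

(* Commutative monads on a cartesian monoidal category, presented as
   symmetric monoidal monads (T, eta, mu, nabla).                       *)
Record CommMonad (C : CartCat) := {
  Tob : ob C -> ob C;
  Tmap : forall A B, hom A B -> hom (Tob A) (Tob B);
  Tmap_id : forall A, Tmap (cid A) = cid (Tob A);
  Tmap_comp : forall A B D (g : hom B D) (f : hom A B),
      Tmap (g \o f) = Tmap g \o Tmap f;
  eta : forall A, hom A (Tob A);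
  mu : forall A, hom (Tob (Tob A)) (Tob A);
  eta_nat : forall A B (f : hom A B), Tmap f \o eta A = eta B \o f;
  mu_nat : forall A B (f : hom A B), Tmap f \o mu A = mu B \o Tmap (Tmap f);
  mu_eta_l : forall A, mu A \o eta (Tob A) = cid (Tob A);
  mu_eta_r : forall A, mu A \o Tmap (eta A) = cid (Tob A);
  mu_assoc : forall A, mu A \o Tmap (mu A) = mu A \o mu (Tob A);
  nabla : forall A B, hom (prod (Tob A) (Tob B)) (Tob (prod A B));
  nabla_nat : forall A A' B B' (f : hom A A') (g : hom B B'),
      nabla A' B' \o pmap (Tmap f) (Tmap g) = Tmap (pmap f g) \o nabla A B;
  nabla_unit_l : forall A,
      Tmap (pr2 one A) \o nabla one A \o pair (eta one \o bang (Tob A)) (cid (Tob A))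
      = cid (Tob A);
  nabla_unit_r : forall A,
      Tmap (pr1 A one) \o nabla A one \o pair (cid (Tob A)) (eta one \o bang (Tob A))
      = cid (Tob A);
  nabla_assoc : forall A B D,
      Tmap (assoc A B D) \o nabla (prod A B) D \o pmap (nabla A B) (cid (Tob D))
      = nabla A (prod B D) \o pmap (cid (Tob A)) (nabla B D) \o assoc (Tob A) (Tob B) (Tob D);
  nabla_sym : forall A B,
      Tmap (swap A B) \o nabla A B = nabla B A \o swap (Tob A) (Tob B);
  nabla_eta : forall A B, nabla A B \o pmap (eta A) (eta B) = eta (prod A B);
  nabla_mu : forall A B,
      mu (prod A B) \o Tmap (nabla A B) \o nabla (Tob A) (Tob B)
      = nabla A B \o pmap (mu A) (mu B)
}.

Arguments Tob {C} _ _.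
Arguments Tmap {C} _ {A B} _.
Arguments eta {C} _ A.
Arguments mu {C} _ A.
Arguments nabla {C} _ A B.

(* The Kleisli category Kl(T): a Kleisli morphism f : A ~> B is
   represented by f^# : A -> TB.                                        *)
Section Kleisli.
Variables (C : CartCat) (T : CommMonad C).

Definition kl (A B : ob C) := hom A (Tob T B).

Definition kcomp (A B D : ob C) (g : kl B D) (f : kl A B) : kl A D :=
  mu T D \o Tmap T g \o f.

Definition ktensor (A A' B B' : ob C) (f : kl A A') (g : kl B B')
  : kl (prod A B) (prod A' B') :=
  nabla T A' B' \o pmap f g.

Fixpoint ktensorn (X Y : ob C) (n : nat) (f : nat -> kl X Y)
  : kl (tpow X n) (tpow Y n) :=
  match n with
  | O => eta T one
  | S n => ktensor (f O) (ktensorn n (fun i => f (S i)))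
  end.

Definition force (A : ob C) : kl (Tob T A) A := cid (Tob T A).

Definition copy (X : ob C) (n : nat) : kl (Tob T X) (tpow (Tob T X) n) :=
  eta T _ \o diag (Tob T X) n.

Definition samp (X : ob C) (n : nat) : kl (Tob T X) (tpow X n) :=
  kcomp (ktensorn n (fun _ => force X)) (copy X n).

(* T is R-observational: for each X the family
   (h_1^b (x) ... (x) h_n^b) (.) samp_n : TX ~> R^{(x)n}
   (over all n and all h_1..h_n : X -> TR) is jointly monic in Kl(T). *)
Definition observational (R : ob C) : Prop :=
  forall (X A : ob C) (u v : kl A (Tob T X)),
    (forall (n : nat) (h : nat -> hom X (Tob T R)),
        kcomp (kcomp (ktensorn n h) (samp X n)) u
        = kcomp (kcomp (ktensorn n h) (samp X n)) v) ->
    u = v.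

End Kleisli.

Arguments kcomp {C} T {A B D} _ _.
Arguments ktensorn {C} T {X Y} n _.
Arguments samp {C} T X n.
Arguments observational {C} T R.


Set Implicit Arguments.
Unset Strict Implicit.

(* The unit e : DX -> DDX (with theta o e = eta) is always a section of m, so
   it suffices to show eta o m = theta, as maps DDX -> TDX.  By observationality
   this may be tested after each Kleisli map (h_1 (x) ... (x) h_n) o samp_n;
   precomposed with eta these become the tuplings H = nabla o (h_1, ..., h_n)
   of maps h_i : DX -> TR, and the test becomes H o m = mu o TH o theta.
   This identity holds for every H that extends along the regular mono theta_X,
   hence for every h : DX -> TR by injectivity of TR, and it is stable under
   nabla-pairing because the points of D are copyable,
   nabla o (theta, theta) = T(diagonal) o theta, and nabla is a monad morphism. *)

Section Cartesian.
Variable C : CartCat.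

Lemma pair_comp (Z Z' A B : ob C) (f : hom Z A) (g : hom Z B) (h : hom Z' Z) :
  pair f g \o h = pair (f \o h) (g \o h).
Proof.
  rewrite <- (pair_uniq (pair f g \o h)).
  rewrite !comp_assoc, pr1_pair, pr2_pair. reflexivity.
Qed.

Lemma pmap_pair (Z A A' B B' : ob C) (f : hom A A') (g : hom B B')
  (a : hom Z A) (b : hom Z B) :
  pmap f g \o pair a b = pair (f \o a) (g \o b).
Proof.
  unfold pmap. rewrite pair_comp, <- !comp_assoc, pr1_pair, pr2_pair. reflexivity.
Qed.

End Cartesian.

Section Sampling.
Variables (C : CartCat) (T : CommMonad C).

Lemma kcomp_eta_comp (A B W : ob C) (K : hom B (Tob T W)) (a : hom A B) :
  kcomp T K (eta T B \o a) = K \o a.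
Proof.
  unfold kcomp. rewrite !comp_assoc, <- (comp_assoc _ (Tmap T K)), eta_nat.
  rewrite !comp_assoc, mu_eta_l, comp_id_l. reflexivity.
Qed.

Lemma ktensorn_force_diag_eta (Y : ob C) (n : nat) :
  ktensorn T n (fun _ => force T Y) \o diag (Tob T Y) n \o eta T Y
  = eta T (tpow Y n) \o diag Y n.
Proof.
  induction n as [|n IH]; simpl.
  - rewrite <- comp_assoc, (bang_uniq (bang _ \o eta T Y)). reflexivity.
  - unfold ktensor. rewrite <- !comp_assoc, pair_comp, pmap_pair, comp_id_l.
    unfold force at 1. rewrite comp_id_l. fold (force T Y).
    rewrite comp_assoc, IH.
    rewrite <- (nabla_eta T Y (tpow Y n)), <- comp_assoc, pmap_pair, comp_id_r.
    reflexivity.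
Qed.

Lemma samp_eta (Y : ob C) (n : nat) :
  samp T Y n \o eta T Y = eta T (tpow Y n) \o diag Y n.
Proof.
  unfold samp, copy. rewrite kcomp_eta_comp. apply ktensorn_force_diag_eta.
Qed.

Lemma kcomp_samp_eta (Y W : ob C) (n : nat) (K : hom (tpow Y n) (Tob T W)) :
  kcomp T K (samp T Y n) \o eta T Y = K \o diag Y n.
Proof.
  unfold kcomp. rewrite <- comp_assoc, samp_eta. apply kcomp_eta_comp.
Qed.

Lemma ktensorn_diag_S (Y W : ob C) (n : nat) (h : nat -> hom Y (Tob T W)) :
  ktensorn T (S n) h \o diag Y (S n)
  = nabla T W (tpow W n) \o pair (h O) (ktensorn T n (fun i => h (S i)) \o diag Y n).
Proof.
  simpl. unfold ktensor. rewrite <- comp_assoc, pmap_pair, comp_id_r. reflexivity.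
Qed.

End Sampling.

Section DeterministicPart.
Variables (C : CartCat) (T : CommMonad C).
Variables (D : ob C -> ob C) (theta : forall X : ob C, hom (D X) (Tob T X)).
Hypothesis Htheta : forall X : ob C,
  is_equalizer (eta T (Tob T X)) (Tmap T (eta T X)) (theta X).

Lemma theta_equalizes (X : ob C) :
  eta T (Tob T X) \o theta X = Tmap T (eta T X) \o theta X.
Proof. exact (proj1 (Htheta X)). Qed.

Lemma theta_monic (X Z : ob C) (a b : hom Z (D X)) :
  theta X \o a = theta X \o b -> a = b.
Proof.
  intros E. destruct (Htheta X) as [Heq Huniv].
  destruct (Huniv Z (theta X \o a)) as [u [_ Hu]].
  { rewrite !comp_assoc, Heq. reflexivity. }
  rewrite (Hu a eq_refl), (Hu b (eq_sym E)). reflexivity.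
Qed.

Lemma theta_regular_mono (X : ob C) : regular_mono (theta X).
Proof. exists (Tob T (Tob T X)), (eta T _), (Tmap T (eta T X)). apply Htheta. Qed.

Lemma eta_factors_through_theta (X : ob C) :
  exists e : hom X (D X), theta X \o e = eta T X.
Proof.
  destruct (proj2 (Htheta X) X (eta T X)) as [e [He _]].
  - symmetry. apply eta_nat.
  - exists e. exact He.
Qed.

Lemma comp_theta_kleisli (X W : ob C) (f : hom (Tob T X) (Tob T W)) :
  f \o theta X = mu T W \o Tmap T (f \o eta T X) \o theta X.
Proof.
  rewrite Tmap_comp, comp_assoc.
  rewrite <- (comp_assoc _ (Tmap T (eta T X)) (theta X)), <- theta_equalizes.
  rewrite comp_assoc, <- (comp_assoc (mu T W) (Tmap T f)), eta_nat.
  rewrite comp_assoc, mu_eta_l, comp_id_l. reflexivity.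
Qed.

Lemma nabla_pair_theta (X : ob C) :
  nabla T X X \o pair (theta X) (theta X) = Tmap T (pair (cid X) (cid X)) \o theta X.
Proof.
  transitivity (nabla T X X \o pair (cid _) (cid _) \o theta X).
  { rewrite <- comp_assoc, pair_comp, !comp_id_l. reflexivity. }
  rewrite comp_theta_kleisli. f_equal.
  rewrite <- comp_assoc, pair_comp, !comp_id_l.
  replace (pair (eta T X) (eta T X))
    with (pmap (eta T X) (eta T X) \o pair (cid X) (cid X))
    by (rewrite pmap_pair, !comp_id_r; reflexivity).
  rewrite comp_assoc, nabla_eta, Tmap_comp, comp_assoc, mu_eta_r, comp_id_l.
  reflexivity.
Qed.

Section Multiplication.
Variables (X : ob C) (m : hom (D (D X)) (D X)).
Hypothesis Hm : theta X \o m = mu T X \o Tmap T (theta X) \o theta (D X).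

Definition m_compatible {W : ob C} (H : hom (D X) (Tob T W)) : Prop :=
  H \o m = mu T W \o Tmap T H \o theta (D X).

Lemma m_compatible_comp_theta (W : ob C) (k : hom (Tob T X) (Tob T W)) :
  m_compatible (k \o theta X).
Proof.
  unfold m_compatible.
  rewrite <- comp_assoc, Hm, !comp_assoc, comp_theta_kleisli. f_equal. f_equal.
  rewrite <- comp_assoc, eta_nat, comp_assoc, <- (comp_assoc k), mu_eta_l, comp_id_r.
  reflexivity.
Qed.

Lemma m_compatible_nabla_pair (W1 W2 : ob C)
  (H1 : hom (D X) (Tob T W1)) (H2 : hom (D X) (Tob T W2)) :
  m_compatible H1 -> m_compatible H2 -> m_compatible (nabla T W1 W2 \o pair H1 H2).
Proof.
  unfold m_compatible; intros E1 E2.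
  rewrite <- comp_assoc, pair_comp, E1, E2.
  rewrite <- !comp_assoc, <- pmap_pair, comp_assoc, <- nabla_mu, <- pmap_pair.
  rewrite <- !comp_assoc, (comp_assoc (nabla T _ _) (pmap _ _)), nabla_nat.
  rewrite <- !comp_assoc, nabla_pair_theta, !comp_assoc. f_equal. f_equal.
  rewrite !Tmap_comp, !comp_assoc. f_equal. f_equal.
  rewrite <- comp_assoc, <- Tmap_comp, pmap_pair, !comp_id_r. reflexivity.
Qed.

Lemma m_compatible_ktensorn_diag (W : ob C) (n : nat) (h : nat -> hom (D X) (Tob T W)) :
  (forall i, m_compatible (h i)) ->
  m_compatible (ktensorn T n h \o diag (D X) n).
Proof.
  revert h; induction n as [|n IH]; intros h Hh.
  - simpl. rewrite <- (bang_uniq (bang (Tob T X) \o theta X)), comp_assoc.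
    apply m_compatible_comp_theta.
  - rewrite ktensorn_diag_S. apply m_compatible_nabla_pair; auto.
Qed.

Lemma eta_comp_m (R : ob C) :
  observational T R -> injective_wrt_regular_monos (Tob T R) ->
  eta T (D X) \o m = theta (D X).
Proof.
  intros Hobs Hinj.
  assert (Hh : forall h : hom (D X) (Tob T R), m_compatible h).
  { intros h. destruct (Hinj _ _ _ (theta_regular_mono X) h) as [k <-].
    apply m_compatible_comp_theta. }
  assert (E : eta T _ \o (eta T (D X) \o m) = eta T _ \o theta (D X)).
  { apply Hobs. intros n h. rewrite !kcomp_eta_comp.
    rewrite comp_theta_kleisli, comp_assoc, kcomp_samp_eta.
    apply m_compatible_ktensorn_diag. intros i. apply Hh. }
  apply (f_equal (fun k => mu T _ \o k)) in E.
  rewrite !comp_assoc, !mu_eta_l, !comp_id_l in E. exact E.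
Qed.

Lemma m_unit_section (e : hom (D X) (D (D X))) :
  theta (D X) \o e = eta T (D X) -> m \o e = cid (D X).
Proof.
  intros He. apply theta_monic.
  rewrite comp_assoc, Hm, comp_id_r, <- comp_assoc, He.
  rewrite <- comp_assoc, eta_nat, comp_assoc, mu_eta_l, comp_id_l. reflexivity.
Qed.

End Multiplication.
End DeterministicPart.

Theorem proposition6p5 (C : CartCat) (T : CommMonad C)
  (D : ob C -> ob C) (theta : forall X : ob C, hom (D X) (Tob T X))
  (Htheta : forall X : ob C,
      is_equalizer (eta T (Tob T X)) (Tmap T (eta T X)) (theta X))
  (R : ob C)
  (Hobs : observational T R)
  (Hinj : injective_wrt_regular_monos (Tob T R)) :
  (* D is idempotent: its multiplication m_X : DDX -> DX, the unique map
     with theta_X o m_X = mu_X o T theta_X o theta_{DX}, is an isomorphism *)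
  forall (X : ob C) (m : hom (D (D X)) (D X)),
    theta X \o m = mu T X \o Tmap T (theta X) \o theta (D X) ->
    is_iso m.
Proof.
  intros X m Hm.
  destruct (eta_factors_through_theta Htheta (D X)) as [e He].
  exists e. split.
  - apply (theta_monic Htheta).
    rewrite comp_assoc, He, comp_id_r.
    exact (eta_comp_m Htheta Hm Hobs Hinj).
  - exact (m_unit_section Htheta Hm He).
Qed.
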